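(* Let $\kappa\in\{0,1\}$ and let $\mathbb{M}_\kappa$ be the simply connected complete Riemannian surface of constant curvature $\kappa$. For parameters $l>0$ and $\varepsilon>0$ (with $l<\pi/2$ when $\kappa=1$), consider in $\mathbb{M}_\kappa$ a quadrilateral $x_0x_1zx_2$, with $z$ and $x_0$ on opposite sides of the geodesic through $x_1,x_2$, such that $d(x_0,x_1)=d(x_0,x_2)=2l$, $d(x_1,z)=d(x_2,z)=l$, and the midpoints $y_1$ of $x_0x_1$ and $y_2$ of $x_0x_2$ satisfy $d(y_1,y_2)=\varepsilon$. Then, for $\varepsilon$ small enough, the circumcenter of the triangle $x_0x_1x_2$ lies inside the triangle $y_1y_2z$.
   Context: The quadrilateral is symmetric with respect to the geodesic through $x_0$ and $z$ (the bisector of the angle at $x_0$); the side-lengths are the geodesic distances in $\mathbb{M}_\kappa$. *)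

(* Model spaces M_kappa, kappa in {0,1}, realised inside R^3:
   - kappa = 0 : the Euclidean plane {z = 0} with the Euclidean distance;
   - kappa = 1 : the unit sphere S^2 with the great-circle distance acos <p,q>. *)
From Stdlib Require Import Reals Lra.
Open Scope R_scope.

Record pt := mkpt { px : R ; py : R ; pz : R }.

Definition dot (p q : pt) : R := px p * px q + py p * py q + pz p * pz q.
Definition vsub (p q : pt) : pt := mkpt (px p - px q) (py p - py q) (pz p - pz q).
Definition vadd (p q : pt) : pt := mkpt (px p + px q) (py p + py q) (pz p + pz q).
Definition vscale (a : R) (p : pt) : pt := mkpt (a * px p) (a * py p) (a * pz p).
Definition cross (p q : pt) : pt :=
  mkpt (py p * pz q - pz p * py q) (pz p * px q - px p * pz q) (px p * py q - py p * px q).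

Definition inM (k : R) (p : pt) : Prop :=
  if Req_EM_T k 0 then pz p = 0 else dot p p = 1.

Definition gdist (k : R) (p q : pt) : R :=
  if Req_EM_T k 0 then sqrt (dot (vsub p q) (vsub p q)) else acos (dot p q).

Definition side (k : R) (a b p : pt) : R :=
  if Req_EM_T k 0 then pz (cross (vsub b a) (vsub p a)) else dot (cross a b) p.

Definition opposite_sides (k : R) (a b p q : pt) : Prop :=
  side k a b p * side k a b q < 0.

Definition is_midpoint (k : R) (a b m : pt) : Prop :=
  inM k m /\ gdist k a m = gdist k a b / 2 /\ gdist k m b = gdist k a b / 2.

(* o is the circumcenter of the triangle abc: the point equidistant from the
   three vertices (on the sphere, the one at distance < pi/2, i.e. not the
   antipodal point) *)
Definition is_circumcenter (k : R) (a b c o : pt) : Prop :=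
  inM k o /\ gdist k o a = gdist k o b /\ gdist k o b = gdist k o c /\
  (k <> 0 -> gdist k o a < PI / 2).

(* p lies in the (closed) geodesic triangle abc, i.e. in the convex hull of
   a, b, c (Euclidean case), resp. the spherical convex hull (cone spanned by
   a, b, c intersected with the sphere) *)
Definition in_triangle (k : R) (a b c p : pt) : Prop :=
  exists u v w : R, 0 <= u /\ 0 <= v /\ 0 <= w /\
    (k = 0 -> u + v + w = 1) /\
    p = vadd (vscale u a) (vadd (vscale v b) (vscale w c)).

From Stdlib Require Import Reals Lra.
Open Scope R_scope.

(* By symmetry everything happens in the plane through x0 containing the bisector of the angle
   at x0.  A point equidistant from x1 and x2, such as the circumcenter c or the apex z, has
   equal inner products with x1 and x2 (with x1 - x0 and x2 - x0 in the Euclidean case), hence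
   is a combination of x0 and x1 + x2 (a multiple of (x1 - x0) + (x2 - x0)).  Such frames are
   nondegenerate: if |x0|^2 = a, |x1|^2 = |x2|^2 = b, x0.x1 = x0.x2 = g and x1.x2 = h, the
   Gram determinant of x0, x1, x2 factors as (b - h) (a (b + h) - 2 g^2).

   In the Euclidean plane, measured from x0 along (x1 - x0) + (x2 - x0), the midpoints y1, y2
   sit at height 1/4, the circumcenter at l^2 / (4 l^2 - e^2), which lies in (1/4, 1/2] for
   e < l, and z at height > 1/2 because it lies across x1x2 from x0; so c is on the segment
   from the midpoint of y1y2 to z.  On the sphere, with m = cos l, z has a negative
   x0-coordinate, while cos e > (1 + m^2) / 2 makes the x0-coordinate of c nonnegative; the
   same computation then writes c as a nonnegative combination of y1 + y2 and z. *)

Lemma pt_ext (p q : pt) : px p = px q -> py p = py q -> pz p = pz q -> p = q.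
Proof. destruct p, q; simpl; intros -> -> ->; reflexivity. Qed.

Lemma dot_comm p q : dot p q = dot q p.
Proof. unfold dot; ring. Qed.

Lemma dot_vaddl p q r : dot (vadd p q) r = dot p r + dot q r.
Proof. unfold dot; simpl; ring. Qed.

Lemma dot_vaddr p q r : dot p (vadd q r) = dot p q + dot p r.
Proof. unfold dot; simpl; ring. Qed.

Lemma dot_vsubl p q r : dot (vsub p q) r = dot p r - dot q r.
Proof. unfold dot; simpl; ring. Qed.

Lemma dot_vsubr p q r : dot p (vsub q r) = dot p q - dot p r.
Proof. unfold dot; simpl; ring. Qed.

Lemma dot_vscalel a p q : dot (vscale a p) q = a * dot p q.
Proof. unfold dot; simpl; ring. Qed.

Lemma dot_vscaler a p q : dot p (vscale a q) = a * dot p q.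
Proof. unfold dot; simpl; ring. Qed.

Lemma dot_self_ge0 p : 0 <= dot p p.
Proof. unfold dot; nra. Qed.

Lemma dot_vsub_self p q : dot (vsub p q) (vsub p q) = dot p p - 2 * dot p q + dot q q.
Proof. rewrite dot_vsubl, !dot_vsubr, (dot_comm q p); ring. Qed.

Lemma dot_vsub_self_sym p q : dot (vsub p q) (vsub p q) = dot (vsub q p) (vsub q p).
Proof. rewrite !dot_vsub_self, (dot_comm q p); ring. Qed.

Lemma law_of_cosines (p r q : pt) :
  dot (vsub p r) (vsub p r) =
  dot (vsub p q) (vsub p q) - 2 * dot (vsub p q) (vsub r q) + dot (vsub r q) (vsub r q).
Proof. destruct p, r, q; unfold dot; simpl; ring. Qed.

Lemma eq_of_dot_vsub_self p q : dot (vsub p q) (vsub p q) = 0 -> p = q.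
Proof.
  destruct p as [p0 p1 p2], q as [q0 q1 q2]; unfold dot; simpl; intros H.
  assert (0 <= (p0 - q0)^2) by apply pow2_ge_0.
  assert (0 <= (p1 - q1)^2) by apply pow2_ge_0.
  assert (0 <= (p2 - q2)^2) by apply pow2_ge_0.
  apply pt_ext; simpl; apply Rminus_diag_uniq, Rsqr_0_uniq; unfold Rsqr; nra.
Qed.

Lemma vsub_eq_vadd p q v : vsub p q = v -> p = vadd q v.
Proof. intros <-; destruct p, q; apply pt_ext; simpl; ring. Qed.

Lemma vsub_midpoints (x0 x1 x2 : pt) k :
  vsub (vscale k (vadd x0 x1)) (vscale k (vadd x0 x2)) = vscale k (vsub x1 x2).
Proof. destruct x0, x1, x2; apply pt_ext; simpl; ring. Qed.

Lemma vadd_scale0l n v : vadd (vscale 0 n) v = v.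
Proof. destruct n, v; apply pt_ext; simpl; ring. Qed.

Lemma triple_scale_expansion (a b n d : pt) :
  vscale (dot (cross a b) n) d =
  vadd (vscale (dot d a) (cross b n))
       (vadd (vscale (dot d b) (cross n a)) (vscale (dot d n) (cross a b))).
Proof. destruct a, b, n, d; apply pt_ext; unfold dot; simpl; ring. Qed.

Lemma eq_of_dot_eq (a b n p q : pt) : dot (cross a b) n <> 0 ->
  dot p a = dot q a -> dot p b = dot q b -> dot p n = dot q n -> p = q.
Proof.
  intros hT ha hb hn.
  pose proof (triple_scale_expansion a b n (vsub p q)) as E.
  rewrite !dot_vsubl, ha, hb, hn, !Rminus_diag in E.
  set (T := dot (cross a b) n) in *.
  destruct p as [p0 p1 p2], q as [q0 q1 q2]; apply pt_ext;
    [apply (f_equal px) in E | apply (f_equal py) in E | apply (f_equal pz) in E];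
    simpl in *; apply (Rmult_eq_reg_l T); auto; lra.
Qed.

Lemma triple_sq_gram (a b n : pt) : (dot (cross a b) n)^2 =
  dot a a * (dot b b * dot n n - dot b n * dot b n)
  - dot a b * (dot a b * dot n n - dot b n * dot a n)
  + dot a n * (dot a b * dot b n - dot b b * dot a n).
Proof. destruct a, b, n; unfold dot, cross; simpl; ring. Qed.

Lemma triple_bisector_combination (a b n : pt) s t :
  dot (cross a b) (vadd (vscale s n) (vscale t (vadd a b))) = s * dot (cross a b) n.
Proof. destruct a, b, n; unfold dot, cross; simpl; ring. Qed.

Section SymmetricFrame.

Variables (x0 x1 x2 : pt) (a b g h : R).
Hypotheses (hx0 : dot x0 x0 = a) (hx1 : dot x1 x1 = b) (hx2 : dot x2 x2 = b)
  (hg1 : dot x0 x1 = g) (hg2 : dot x0 x2 = g) (hh : dot x1 x2 = h).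

Lemma triple_sq_symmetric : (dot (cross x1 x2) x0)^2 = (b - h) * (a * (b + h) - 2 * g^2).
Proof.
  rewrite triple_sq_gram, (dot_comm x1 x0), (dot_comm x2 x0), hx0, hx1, hx2, hg1, hg2, hh.
  ring.
Qed.

Hypotheses (hhb : h < b) (hD : 0 < a * (b + h) - 2 * g^2).

Lemma triple_symmetric_neq0 : dot (cross x1 x2) x0 <> 0.
Proof.
  intros H0; pose proof triple_sq_symmetric as E.
  rewrite H0 in E; nra.
Qed.

Lemma symmetric_decomposition (p : pt) (al be : R) :
  dot p x1 = dot p x2 ->
  dot p x0 = al * a + 2 * be * g -> dot p x1 = al * g + be * (b + h) ->
  p = vadd (vscale al x0) (vscale be (vadd x1 x2)).
Proof.
  intros h12 h0 h1.
  apply (eq_of_dot_eq x1 x2 x0); [exact triple_symmetric_neq0 | | |];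
    rewrite dot_vaddl, !dot_vscalel, !dot_vaddl;
    rewrite ?(dot_comm x1 x0), ?(dot_comm x2 x0), ?(dot_comm x2 x1),
      ?hx0, ?hx1, ?hx2, ?hg1, ?hg2, ?hh; lra.
Qed.

End SymmetricFrame.

Lemma median_identity (a b y : pt) :
  dot (vsub (vscale 2 y) (vadd a b)) (vsub (vscale 2 y) (vadd a b)) =
  2 * dot (vsub a y) (vsub a y) + 2 * dot (vsub y b) (vsub y b) - dot (vsub a b) (vsub a b).
Proof. destruct a, b, y; unfold dot; simpl; ring. Qed.

Lemma plane_midpoint (a b y : pt) r :
  dot (vsub a y) (vsub a y) = r^2 -> dot (vsub y b) (vsub y b) = r^2 ->
  dot (vsub a b) (vsub a b) = 4 * r^2 -> y = vscale (/2) (vadd a b).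
Proof.
  intros ha hb hab.
  assert (E : vscale 2 y = vadd a b).
  { apply eq_of_dot_vsub_self; rewrite median_identity, ha, hb, hab; ring. }
  rewrite <- E; destruct y; apply pt_ext; simpl; field.
Qed.

Lemma sphere_midpoint (a b y : pt) m : 0 < m ->
  dot a a = 1 -> dot b b = 1 -> dot y y = 1 ->
  dot a b = 2 * m^2 - 1 -> dot a y = m -> dot y b = m ->
  y = vscale (/(2 * m)) (vadd a b).
Proof.
  intros hm ha hb hy hab hay hyb.
  assert (E : vscale (2 * m) y = vadd a b).
  { apply eq_of_dot_vsub_self.
    rewrite dot_vsub_self, !dot_vscalel, !dot_vscaler, !dot_vaddl, !dot_vaddr.
    rewrite ?(dot_comm b a), ?(dot_comm y a), ?(dot_comm b y), ha, hb, hy, hab, hay, hyb; ring. }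
  rewrite <- E; destruct y; apply pt_ext; simpl; field; lra.
Qed.

Lemma side_plane_bisector (x0 x1 x2 : pt) t :
  pz (cross (vsub x2 x1) (vsub (vadd x0 (vscale t (vadd (vsub x1 x0) (vsub x2 x0)))) x1)) =
  (1 - 2 * t) * pz (cross (vsub x2 x1) (vsub x0 x1)).
Proof. destruct x0, x1, x2; simpl; ring. Qed.

Lemma plane_bisector_combination (x0 x1 x2 : pt) s t : 1/4 < s -> s < t ->
  in_triangle 0 (vscale (/2) (vadd x0 x1)) (vscale (/2) (vadd x0 x2))
    (vadd x0 (vscale t (vadd (vsub x1 x0) (vsub x2 x0))))
    (vadd x0 (vscale s (vadd (vsub x1 x0) (vsub x2 x0)))).
Proof.
  intros hs hst.
  set (w := (s - 1/4) / (t - 1/4)).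
  assert (hw : 0 < w < 1).
  { assert (w * (t - 1/4) = s - 1/4) by (unfold w; field; lra).
    split; [apply Rdiv_lt_0_compat |]; nra. }
  exists ((1 - w) / 2), ((1 - w) / 2), w.
  repeat split; try lra.
  destruct x0, x1, x2; apply pt_ext; simpl; unfold w; field; lra.
Qed.

Lemma sphere_bisector_combination (x0 x1 x2 : pt) m ac bc az bz :
  0 < m -> 0 <= ac -> az < 0 -> 0 < 2 * bc - ac -> 0 < 2 * bz - az ->
  in_triangle 1 (vscale (/(2 * m)) (vadd x0 x1)) (vscale (/(2 * m)) (vadd x0 x2))
    (vadd (vscale az x0) (vscale bz (vadd x1 x2)))
    (vadd (vscale ac x0) (vscale bc (vadd x1 x2))).
Proof.
  intros hm hac haz hc hz.
  set (w := (2 * bc - ac) / (2 * bz - az)).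
  assert (hw : 0 < w) by (apply Rdiv_lt_0_compat; lra).
  assert (hu : 0 <= m * (ac - w * az)) by (apply Rmult_le_pos; nra).
  exists (m * (ac - w * az)), (m * (ac - w * az)), w.
  repeat split; try lra.
  destruct x0, x1, x2; apply pt_ext; simpl; unfold w; field; lra.
Qed.

Definition e3 : pt := mkpt 0 0 1.

Section PlaneConfiguration.

Variables (l e : R) (x0 x1 x2 z c : pt).
Hypotheses (hel : 0 < e < l)
  (p0 : pz x0 = 0) (p1 : pz x1 = 0) (p2 : pz x2 = 0) (pzz : pz z = 0) (pc : pz c = 0)
  (d01 : dot (vsub x0 x1) (vsub x0 x1) = 4 * l^2)
  (d02 : dot (vsub x0 x2) (vsub x0 x2) = 4 * l^2)
  (d12 : dot (vsub x1 x2) (vsub x1 x2) = 4 * e^2).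

Lemma plane_decomposition (p : pt) be : pz p = 0 ->
  dot p (vsub x1 x0) = dot p (vsub x2 x0) ->
  dot p (vsub x1 x0) = be * (8 * l^2 - 2 * e^2) ->
  p = vscale be (vadd (vsub x1 x0) (vsub x2 x0)).
Proof.
  intros hp h12 h1.
  assert (hA : dot (vsub x1 x0) (vsub x1 x0) = 4 * l^2) by (rewrite dot_vsub_self_sym; exact d01).
  assert (hB : dot (vsub x2 x0) (vsub x2 x0) = 4 * l^2) by (rewrite dot_vsub_self_sym; exact d02).
  assert (hAB : dot (vsub x1 x0) (vsub x2 x0) = 4 * l^2 - 2 * e^2).
  { assert (E : vsub (vsub x1 x0) (vsub x2 x0) = vsub x1 x2)
      by (destruct x0, x1, x2; apply pt_ext; simpl; ring).
    pose proof (dot_vsub_self (vsub x1 x0) (vsub x2 x0)) as F.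
    rewrite E, d12, hA, hB in F; lra. }
  rewrite <- (vadd_scale0l e3).
  assert (hn : forall q, dot e3 q = pz q) by (intros q; unfold dot; simpl; ring).
  apply (symmetric_decomposition e3 _ _ 1 (4 * l^2) 0 (4 * l^2 - 2 * e^2));
    rewrite ?hn, ?(dot_comm p e3), ?hn; simpl; rewrite ?p0, ?p1, ?p2; auto; nra.
Qed.

Lemma plane_circumcenter_on_bisector :
  dot (vsub c x0) (vsub c x0) = dot (vsub c x1) (vsub c x1) ->
  dot (vsub c x1) (vsub c x1) = dot (vsub c x2) (vsub c x2) ->
  c = vadd x0 (vscale (l^2 / (4 * l^2 - e^2)) (vadd (vsub x1 x0) (vsub x2 x0))).
Proof.
  rewrite (law_of_cosines c x1 x0), (law_of_cosines c x2 x0), !(dot_vsub_self_sym _ x0), d01, d02.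
  intros hc1 hc2.
  apply vsub_eq_vadd, plane_decomposition; [simpl; rewrite pc, p0; ring | lra |].
  field_simplify_eq; nra.
Qed.

Lemma plane_apex_on_bisector :
  dot (vsub x1 z) (vsub x1 z) = dot (vsub x2 z) (vsub x2 z) ->
  pz (cross (vsub x2 x1) (vsub x0 x1)) * pz (cross (vsub x2 x1) (vsub z x1)) < 0 ->
  exists t, 1/2 < t /\ z = vadd x0 (vscale t (vadd (vsub x1 x0) (vsub x2 x0))).
Proof.
  rewrite !(dot_vsub_self_sym _ z), (law_of_cosines z x1 x0), (law_of_cosines z x2 x0),
    !(dot_vsub_self_sym _ x0), d01, d02.
  intros hz hside.
  set (t := dot (vsub z x0) (vsub x1 x0) / (8 * l^2 - 2 * e^2)).
  assert (Ez : z = vadd x0 (vscale t (vadd (vsub x1 x0) (vsub x2 x0)))).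
  { apply vsub_eq_vadd, plane_decomposition; [simpl; rewrite pzz, p0; ring | lra |].
    unfold t; field; nra. }
  exists t; split; [| exact Ez].
  rewrite Ez, side_plane_bisector in hside; nra.
Qed.

End PlaneConfiguration.

Lemma sphere_chord (x0 x1 x2 : pt) m E : 0 < m ->
  dot x0 x0 = 1 -> dot x0 x1 = 2 * m^2 - 1 -> dot x0 x2 = 2 * m^2 - 1 ->
  dot (vscale (/(2 * m)) (vadd x0 x1)) (vscale (/(2 * m)) (vadd x0 x2)) = E ->
  dot x1 x2 = 1 - 4 * m^2 * (1 - E).
Proof.
  intros hm h0 h1 h2 hE.
  rewrite dot_vscalel, dot_vscaler, !dot_vaddl, !dot_vaddr, (dot_comm x1 x0), h0, h1, h2 in hE.
  rewrite <- hE; field; lra.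
Qed.

Section SphereConfiguration.

Variables (m E : R) (x0 x1 x2 z c : pt).
Hypotheses (hm : 0 < m < 1) (hE : (1 + m^2) / 2 < E < 1)
  (u0 : dot x0 x0 = 1) (u1 : dot x1 x1 = 1) (u2 : dot x2 x2 = 1)
  (h01 : dot x0 x1 = 2 * m^2 - 1) (h02 : dot x0 x2 = 2 * m^2 - 1)
  (h12 : dot x1 x2 = 1 - 4 * m^2 * (1 - E)).

Lemma sphere_frame_bounds :
  let g := 2 * m^2 - 1 in let h := 1 - 4 * m^2 * (1 - E) in
  h < 1 /\ 0 < 1 + h - 2 * g^2 /\ 0 < 1 + h - 2 * g /\ 0 < 1 + h.
Proof.
  intros g h; unfold g, h.
  assert (0 < m^2) by nra.
  assert (0 < m^2 * (1 - E)) by nra.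
  assert (0 < m^2 * (1 + E - 2 * m^2)) by (apply Rmult_lt_0_compat; nra).
  assert (0 < (1 - m^2) * (1 - m^2 / 2)) by (apply Rmult_lt_0_compat; nra).
  repeat split; nra.
Qed.

Lemma sphere_decomposition (p : pt) al be :
  dot p x1 = dot p x2 ->
  dot p x0 = al + 2 * be * (2 * m^2 - 1) ->
  dot p x1 = al * (2 * m^2 - 1) + be * (1 + (1 - 4 * m^2 * (1 - E))) ->
  p = vadd (vscale al x0) (vscale be (vadd x1 x2)).
Proof.
  intros h12' ha hb.
  destruct sphere_frame_bounds as (hh & hD & _).
  apply (symmetric_decomposition x0 x1 x2 1 1 (2 * m^2 - 1) (1 - 4 * m^2 * (1 - E)));
    auto; try lra; nra.
Qed.

Lemma sphere_circumcenter_in_triangle :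
  dot z x1 = m -> dot z x2 = m ->
  dot c x1 = dot c x0 -> dot c x2 = dot c x0 -> 0 < dot c x0 ->
  dot (cross x1 x2) x0 * dot (cross x1 x2) z < 0 ->
  in_triangle 1 (vscale (/(2 * m)) (vadd x0 x1)) (vscale (/(2 * m)) (vadd x0 x2)) z c.
Proof.
  intros hz1 hz2 hc1 hc2 hc0 hside.
  set (g := 2 * m^2 - 1) in *; set (h := 1 - 4 * m^2 * (1 - E)) in *.
  set (D := 1 + h - 2 * g^2).
  destruct sphere_frame_bounds as (hh & hD & hac' & hh1); fold g h in hh, hD, hac', hh1.
  set (r := dot c x0) in *; set (s := dot z x0).
  set (ac := r * (1 + h - 2 * g) / D); set (bc := r * (1 - g) / D).
  set (az := (s * (1 + h) - 2 * g * m) / D); set (bz := (m - g * s) / D).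
  assert (Ec : c = vadd (vscale ac x0) (vscale bc (vadd x1 x2))).
  { apply sphere_decomposition; fold g h; [congruence | |]; fold r; rewrite ?hc1;
      unfold ac, bc, D; field; lra. }
  assert (Ez : z = vadd (vscale az x0) (vscale bz (vadd x1 x2))).
  { apply sphere_decomposition; fold g h; [congruence | |]; fold s; rewrite ?hz1;
      unfold az, bz, D; field; lra. }
  assert (haz : az < 0).
  { rewrite Ez, triple_bisector_combination in hside.
    assert (0 <= dot (cross x1 x2) x0 ^ 2) by apply pow2_ge_0.
    nra. }
  assert (hac : 0 <= ac).
  { unfold ac, D; apply Rlt_le, Rdiv_lt_0_compat; [apply Rmult_lt_0_compat|]; lra. }
  assert (hbc : 0 < 2 * bc - ac).
  { replace (2 * bc - ac) with (r * (1 - h) / D) by (unfold ac, bc, D; field; lra).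
    unfold D; apply Rdiv_lt_0_compat; [apply Rmult_lt_0_compat|]; lra. }
  assert (hbz : 0 < 2 * bz - az).
  { assert (Hm : (2 * bz - az) * (1 + h) = 2 * m - az * (1 + h + 2 * g))
      by (unfold az, bz, D; field; lra).
    assert (Hg : 1 + h + 2 * g = 4 * m^2 * E) by (unfold h, g; ring).
    rewrite Hg in Hm.
    assert (0 < m^2 * E) by (apply Rmult_lt_0_compat; nra).
    assert (0 < 2 * m - az * (4 * m^2 * E)) by nra.
    nra. }
  rewrite Ec, Ez; apply sphere_bisector_combination; lra.
Qed.

End SphereConfiguration.

Lemma inM_plane p : inM 0 p -> pz p = 0.
Proof. unfold inM; case Req_EM_T; [auto | congruence]. Qed.

Lemma inM_sphere p : inM 1 p -> dot p p = 1.
Proof. unfold inM; case Req_EM_T; [lra | auto]. Qed.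

Lemma side_plane a b p : side 0 a b p = pz (cross (vsub b a) (vsub p a)).
Proof. unfold side; case Req_EM_T; [auto | congruence]. Qed.

Lemma side_sphere a b p : side 1 a b p = dot (cross a b) p.
Proof. unfold side; case Req_EM_T; [lra | auto]. Qed.

Lemma gdist_plane_sq p q r : gdist 0 p q = r -> dot (vsub p q) (vsub p q) = r^2.
Proof.
  unfold gdist; case Req_EM_T; [intros _ <- | congruence].
  rewrite pow2_sqrt; [reflexivity | apply dot_self_ge0].
Qed.

Lemma gdist_plane_eq p q p' q' : gdist 0 p q = gdist 0 p' q' ->
  dot (vsub p q) (vsub p q) = dot (vsub p' q') (vsub p' q').
Proof. intros E; rewrite (gdist_plane_sq _ _ _ E), <- (gdist_plane_sq p' q' _ eq_refl); reflexivity. Qed.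

Lemma dot_unit_bounds a b : dot a a = 1 -> dot b b = 1 -> -1 <= dot a b <= 1.
Proof.
  intros ha hb.
  pose proof (dot_self_ge0 (vadd a b)); pose proof (dot_self_ge0 (vsub a b)).
  rewrite dot_vsub_self in *; rewrite dot_vaddl, !dot_vaddr, (dot_comm b a) in *; lra.
Qed.

Lemma gdist_sphere_cos p q r : dot p p = 1 -> dot q q = 1 -> gdist 1 p q = r -> dot p q = cos r.
Proof.
  intros hp hq; unfold gdist; case Req_EM_T; [lra | intros _ <-].
  rewrite cos_acos; auto using dot_unit_bounds.
Qed.

Lemma gdist_sphere_eq p q q' : dot p p = 1 -> dot q q = 1 -> dot q' q' = 1 ->
  gdist 1 p q = gdist 1 p q' -> dot p q = dot p q'.
Proof.
  intros hp hq hq' E.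
  rewrite (gdist_sphere_cos p q _ hp hq E), (gdist_sphere_cos p q' _ hp hq' eq_refl); reflexivity.
Qed.

Lemma gdist_sphere_lt_half_pi p q : dot p p = 1 -> dot q q = 1 ->
  gdist 1 p q < PI / 2 -> 0 < dot p q.
Proof.
  intros hp hq hd; rewrite (gdist_sphere_cos p q _ hp hq eq_refl).
  apply cos_gt_0; [| exact hd].
  unfold gdist; case Req_EM_T; [lra | intros _].
  pose proof (acos_bound (dot p q)); pose proof PI_RGT_0; lra.
Qed.

Definition circumcenter_in_midpoint_triangle (k l : R) : Prop :=
  exists e0 : R, 0 < e0 /\
  forall e : R, 0 < e < e0 ->
  forall x0 x1 x2 z y1 y2 : pt,
    inM k x0 -> inM k x1 -> inM k x2 -> inM k z ->
    opposite_sides k x1 x2 x0 z ->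
    gdist k x0 x1 = 2 * l -> gdist k x0 x2 = 2 * l ->
    gdist k x1 z = l -> gdist k x2 z = l ->
    is_midpoint k x0 x1 y1 -> is_midpoint k x0 x2 y2 ->
    gdist k y1 y2 = e ->
    forall c : pt, is_circumcenter k x0 x1 x2 c -> in_triangle k y1 y2 z c.

Lemma plane_circumcenter_in_midpoint_triangle l : 0 < l ->
  circumcenter_in_midpoint_triangle 0 l.
Proof.
  intros hl; exists l; split; [exact hl |].
  intros e he x0 x1 x2 z y1 y2 i0 i1 i2 iz hop d01 d02 d1z d2z
    [_ [m1a m1b]] [_ [m2a m2b]] dy c [ic [hc1 [hc2 _]]].
  apply inM_plane in i0, i1, i2, iz, ic.
  rewrite d01 in m1a, m1b; rewrite d02 in m2a, m2b.
  apply gdist_plane_sq in d01, d02, m1a, m1b, m2a, m2b, dy.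
  apply gdist_plane_eq in hc1, hc2.
  assert (hz : dot (vsub x1 z) (vsub x1 z) = dot (vsub x2 z) (vsub x2 z))
    by (apply gdist_plane_eq; congruence).
  assert (Y1 := plane_midpoint _ _ _ _ m1a m1b ltac:(rewrite d01; field)).
  assert (Y2 := plane_midpoint _ _ _ _ m2a m2b ltac:(rewrite d02; field)).
  subst y1 y2.
  rewrite vsub_midpoints, dot_vscalel, dot_vscaler in dy.
  assert (d12 : dot (vsub x1 x2) (vsub x1 x2) = 4 * e^2) by lra.
  unfold opposite_sides in hop; rewrite !side_plane in hop.
  destruct (plane_apex_on_bisector l e x0 x1 x2 z) as [t [ht Ez]]; auto; try lra.
  rewrite Ez, (plane_circumcenter_on_bisector l e x0 x1 x2 c); auto; try lra.
  assert (0 < e^2 < l^2) by (split; nra).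
  assert (hK : 0 < 4 * l^2 - e^2) by lra.
  assert (hs : l^2 / (4 * l^2 - e^2) * (4 * l^2 - e^2) = l^2) by (field; lra).
  apply plane_bisector_combination; nra.
Qed.

Lemma sphere_circumcenter_in_midpoint_triangle l : 0 < l -> l < PI / 2 ->
  circumcenter_in_midpoint_triangle 1 l.
Proof.
  intros hl hlpi.
  pose proof PI_RGT_0 as hpi.
  set (m := cos l).
  assert (hm : 0 < m < 1).
  { split; [apply cos_gt_0; lra |].
    rewrite <- cos_0; apply cos_decreasing_1; lra. }
  set (E0 := (1 + m^2) / 2).
  assert (hE0 : -1 < E0 < 1) by (unfold E0; nra).
  pose proof (acos_bound_lt E0 hE0) as hacos.
  exists (acos E0); split; [lra |].
  intros e he x0 x1 x2 z y1 y2 i0 i1 i2 iz hop d01 d02 d1z d2z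
    [iy1 [m1a m1b]] [iy2 [m2a m2b]] dy c [ic [hc1 [hc2 hc0]]].
  specialize (hc0 ltac:(lra)).
  apply inM_sphere in i0, i1, i2, iz, ic, iy1, iy2.
  rewrite d01 in m1a, m1b; rewrite d02 in m2a, m2b.
  replace (2 * l / 2) with l in m1a, m1b, m2a, m2b by field.
  apply gdist_sphere_cos in d01, d02, d1z, d2z, m1a, m1b, m2a, m2b, dy; auto.
  rewrite cos_2a_cos in d01, d02; fold m in d01, d02, d1z, d2z, m1a, m1b, m2a, m2b.
  assert (hE : E0 < cos e < 1).
  { split.
    - rewrite <- (cos_acos E0) by lra; apply cos_decreasing_1; lra.
    - rewrite <- cos_0; apply cos_decreasing_1; lra. }
  assert (Y1 := sphere_midpoint _ _ _ _ (proj1 hm) i0 i1 iy1 ltac:(rewrite d01; ring) m1a m1b).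
  assert (Y2 := sphere_midpoint _ _ _ _ (proj1 hm) i0 i2 iy2 ltac:(rewrite d02; ring) m2a m2b).
  subst y1 y2.
  assert (d12 := sphere_chord _ _ _ _ _ (proj1 hm) i0 ltac:(rewrite d01; ring)
    ltac:(rewrite d02; ring) dy).
  unfold opposite_sides in hop; rewrite !side_sphere in hop.
  apply sphere_circumcenter_in_triangle with (E := cos e); auto; try lra.
  - rewrite dot_comm; exact d1z.
  - rewrite dot_comm; exact d2z.
  - symmetry; apply gdist_sphere_eq; auto.
  - symmetry; apply gdist_sphere_eq; congruence.
  - apply gdist_sphere_lt_half_pi; auto.
Qed.

Theorem lemma13 (k l : R) (hk : k = 0 \/ k = 1) (hl : 0 < l)
  (hl1 : k = 1 -> l < PI / 2) :
  exists e0 : R, 0 < e0 /\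
  forall e : R, 0 < e < e0 ->
  forall x0 x1 x2 z y1 y2 : pt,
    inM k x0 -> inM k x1 -> inM k x2 -> inM k z ->
    opposite_sides k x1 x2 x0 z ->
    gdist k x0 x1 = 2 * l -> gdist k x0 x2 = 2 * l ->
    gdist k x1 z = l -> gdist k x2 z = l ->
    is_midpoint k x0 x1 y1 -> is_midpoint k x0 x2 y2 ->
    gdist k y1 y2 = e ->
    forall c : pt, is_circumcenter k x0 x1 x2 c -> in_triangle k y1 y2 z c.
Proof.
  destruct hk as [-> | ->].
  - exact (plane_circumcenter_in_midpoint_triangle l hl).
  - exact (sphere_circumcenter_in_midpoint_triangle l hl (hl1 eq_refl)).
Qed.
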